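(* Let $q$ be a prime power, let $m>a\geq0$, $n>b\geq0$, $h\geq0$ be integers with $h\leq (m-a)(n-b)-\max\{m-a,n-b\}$, and let $N=mn$. If $\mathcal{C}_{\mathsf{out}}$ is an $[N,k]$ code over $\mathbb{F}_q$ with $\mathcal{C}_{\mathsf{out}}\in\mathbb{C}^{\mathsf{MR}}_{m\times n}(a,b,0)$, then there exists an $[N,k-h]$ code $\mathcal{C}$ over $\mathbb{F}_{q^{k}}$ with $\mathcal{C}\in\mathbb{C}^{\mathsf{MR}}_{m\times n}(a,b,h)$.
   Context: Positions of vectors in $\mathbb{F}^{mn}$ are identified with the grid $[m]\times[n]$, where $[k]=\{1,\dots,k\}$. For linear codes $\mathcal{C}_1\subseteq\mathbb{F}^m$, $\mathcal{C}_2\subseteq\mathbb{F}^n$ with generator matrices $\mathbf{G}_1,\mathbf{G}_2$, $\mathcal{C}_1\otimes\mathcal{C}_2$ is the row span of $\mathbf{G}_1\otimes\mathbf{G}_2$. A code for the topology $T_{m\times n}(a,b,h)$ is a linear code over a finite field $\mathbb{F}$ with a parity-check matrix $\begin{pmatrix}\mathbf{H}_{\mathsf{local}}\\ \mathbf{H}_{\mathsf{global}}\end{pmatrix}$, where $\mathbf{H}_{\mathsf{local}}$ is a parity-check matrix of $\mathcal{C}_{\mathsf{col}}\otimes\mathcal{C}_{\mathsf{row}}$ for some linear $[m,\geq m-a]$ code $\mathcal{C}_{\mathsf{col}}$ and $[n,\geq n-b]$ code $\mathcal{C}_{\mathsf{row}}$ over $\mathbb{F}$, and $\mathbf{H}_{\mathsf{global}}$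 is an arbitrary $h\times mn$ matrix; $\mathbb{C}_{m\times n}(a,b,h)$ is the set of all such codes (over any finite field). A code corrects an erasure pattern $\mathcal{E}\subseteq[m]\times[n]$ if no two distinct codewords agree on all positions outside $\mathcal{E}$. $\mathcal{E}$ is correctable in $T_{m\times n}(a,b,h)$ if some code in $\mathbb{C}_{m\times n}(a,b,h)$ corrects it; $\mathbb{E}_{m\times n}(a,b,h)$ is the set of such patterns. A code in $\mathbb{C}_{m\times n}(a,b,h)$ is maximally recoverable (MR) if it corrects every pattern in $\mathbb{E}_{m\times n}(a,b,h)$; $\mathbb{C}^{\mathsf{MR}}_{m\times n}(a,b,h)$ is the set of MR codes. *)

From HB Require Import structures.
From mathcomp Require Import all_boot all_order all_algebra all_field.
From mathcomp Require Import mxtens.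
Set Implicit Arguments. Unset Strict Implicit. Unset Printing Implicit Defensive.
Import GRing.Theory.
Local Open Scope ring_scope.

(* Conventions.
   - A linear code of length N over a field F is the row space of a matrix
     C : 'M[F]_N (any spanning set of rows); its dimension is \rank C.
   - Vectors of F^(m*n) are row vectors 'rV[F]_(m*n); the grid position
     (i,j) in [m]x[n] is the coordinate mxtens_index (i,j) (= i*n + j),
     which is the indexing used by the Kronecker product tensmx (A *t B). *)

Definition pc_code (F : fieldType) (r N : nat) (H : 'M[F]_(r, N)) : 'M[F]_N :=
  kermx H^T.

Definition tens_code (F : fieldType) (m n : nat) (Gcol : 'M[F]_m) (Grow : 'M[F]_n)
  : 'M[F]_(m * n) := Gcol *t Grow.

Definition in_topology (F : fieldType) (m n a b h : nat) (C : 'M[F]_(m * n)) : Prop :=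
  exists (Gcol : 'M[F]_m) (Grow : 'M[F]_n),
    [/\ (m - a <= \rank Gcol)%N, (n - b <= \rank Grow)%N &
    exists (r : nat) (Hloc : 'M[F]_(r, m * n)) (Hglob : 'M[F]_(h, m * n)),
      (pc_code Hloc == tens_code Gcol Grow)%MS /\
      (C == pc_code (col_mx Hloc Hglob))%MS].

Definition corrects (F : fieldType) (m n : nat) (C : 'M[F]_(m * n))
  (E : {set 'I_m * 'I_n}) : Prop :=
  forall x y : 'rV[F]_(m * n), (x <= C)%MS -> (y <= C)%MS ->
    (forall ij, ij \notin E -> x 0 (mxtens_index ij) = y 0 (mxtens_index ij)) ->
    x = y.

Definition correctable (m n a b h : nat) (E : {set 'I_m * 'I_n}) : Prop :=
  exists (F : finFieldType) (C : 'M[F]_(m * n)),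
    in_topology a b h C /\ corrects C E.

Definition is_MR (F : fieldType) (m n a b h : nat) (C : 'M[F]_(m * n)) : Prop :=
  in_topology a b h C /\
  forall E : {set 'I_m * 'I_n}, correctable a b h E -> corrects C E.

(* Let G be a basis of C_out, alpha a basis of F_{q^k} over F_q and M the k x h
   matrix (alpha_j^(q^i)).  The code {u G : u M = 0} keeps the local structure of
   C_out, adds the h global parities given by M and has dimension k - h.
   If E is correctable in T(a, b, h), the codewords of C_out supported on E form
   a space of dimension t <= h: an information set of the corresponding space of
   a witness code turns E into a pattern correctable in T(a, b, 0), which C_out
   corrects.  A codeword of the new code supported on E is then lambda Y G with
   Y a row-free t x k matrix over F_q, and lambda Y M = lambda M' where M' is the
   Moore matrix of the t elements Y alpha, still independent over F_q.  Such a
   Moore matrix with h >= t columns has rank t, so lambda = 0. *)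

From HB Require Import structures.
From mathcomp Require Import all_boot all_order all_algebra all_field.
From mathcomp Require Import mxtens.
Set Implicit Arguments. Unset Strict Implicit. Unset Printing Implicit Defensive.
Import GRing.Theory.
Local Open Scope ring_scope.

Lemma tensmx11 (K : comPzRingType) p r :
  (1%:M : 'M[K]_p) *t (1%:M : 'M[K]_r) = 1%:M.
Proof.
apply/matrixP => i j.
case: (mxtens_indexP i) => i1 i2; case: (mxtens_indexP j) => j1 j2.
rewrite tensmxE !mxE (inj_eq (can_inj (@mxtens_indexK _ _))) xpair_eqE.
by case: (i1 == j1); case: (i2 == j2); rewrite ?mulr1n ?mulr0n ?mulr1 ?mulr0.
Qed.

Lemma mxrank_tensmx_ge (K : fieldType) p1 p2 r1 r2 (A : 'M[K]_(p1, p2))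
    (B : 'M[K]_(r1, r2)) :
  (\rank A * \rank B <= \rank (A *t B))%N.
Proof.
have /row_freeP[PA PA_inv] := row_base_free A.
have /row_freeP[PB PB_inv] := row_base_free B.
have base_free : row_free (row_base A *t row_base B).
  by apply/row_freeP; exists (PA *t PB); rewrite tensmx_mul PA_inv PB_inv tensmx11.
rewrite -(eqP base_free); apply: mxrankS.
have sA : (row_base A <= A)%MS by rewrite eq_row_base.
have sB : (row_base B <= B)%MS by rewrite eq_row_base.
by rewrite -(mulmxKpV sA) -(mulmxKpV sB) -tensmx_mul submxMl.
Qed.

Lemma eqmx_rV (K : fieldType) p1 p2 N (A : 'M[K]_(p1, N)) (B : 'M_(p2, N)) :
  (forall x : 'rV_N, (x <= A)%MS = (x <= B)%MS) -> (A == B)%MS.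
Proof.
move=> eqAB; apply/andP; split; apply/row_subP => i;
  by [rewrite -eqAB row_sub | rewrite eqAB row_sub].
Qed.

Lemma mxrank_le_inj (K : fieldType) p N r (V : 'M[K]_(p, N)) (A : 'M_(N, r)) :
  (forall x : 'rV_N, (x <= V)%MS -> x *m A = 0 -> x = 0) -> (\rank V <= r)%N.
Proof.
move=> injA; rewrite -(mxrank_mul_ker V A).
have /eqP -> : \rank (V :&: kermx A) == 0%N.
  rewrite mxrank_eq0; apply/rowV0P => x; rewrite sub_capmx sub_kermx.
  by case/andP => xV /eqP; apply: injA.
by rewrite addn0 rank_leq_col.
Qed.

Lemma exists_information_set (K : fieldType) p N (V : 'M[K]_(p, N)) :
  exists f : 'I_(\rank V) -> 'I_N,
    forall x : 'rV_N, (x <= V)%MS -> x *m colsub f 1%:M = 0 -> x = 0.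
Proof.
rewrite -mxrank_tr; pose f := maxrankfun V^T; exists f => x xV xf.
have rank_sel : \rank (V *m colsub f 1%:M) = \rank V.
  rewrite mulmx_colsub mulmx1 -mxrank_tr -[RHS]mxrank_tr trmx_mxsub.
  exact/eqP/maxrowsub_free.
have := mxrank_mul_ker V (colsub f 1%:M); rewrite rank_sel -[RHS]addn0 => /addnI.
move=> /eqP; rewrite mxrank_eq0 => /rowV0P; apply.
by rewrite sub_capmx xV sub_kermx xf eqxx.
Qed.

Section MooreMatrix.
Variables (F : finFieldType) (L : fieldType) (phi : {rmorphism F -> L}).
Local Notation q := #|F|.
Local Notation "A ^f" := (map_mx phi A) : ring_scope.

Definition free_over t (beta : 'cV[L]_t) :=
  forall d : 'rV[F]_t, d^f *m beta = 0 -> d = 0.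

Definition moore s t (beta : 'cV[L]_t) : 'M[L]_(t, s) :=
  \matrix_(l, i) beta l 0 ^+ (q ^ i).

Lemma expr_card_sum i I (r : seq I) (P : pred I) (G : I -> L) :
  (\sum_(j <- r | P j) G j) ^+ (q ^ i) = \sum_(j <- r | P j) G j ^+ (q ^ i).
Proof.
have [p p_pr pcharFp] := finPcharP F.
have q_nat : [pchar L].-nat (q ^ i)%N.
  by rewrite (card_pprimeChar pcharFp) -expnM pnatX (pnatE _ p_pr) (rmorph_pchar phi).
apply: (big_morph (fun x => x ^+ (q ^ i)) (fun x y => exprDn_pchar x y q_nat)).
by rewrite expr0n expn_eq0 (gtn_eqF (ltnW (finNzRing_gt1 F))).
Qed.

Lemma rmorph_expr_card (c : F) i : phi c ^+ (q ^ i) = phi c.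
Proof.
rewrite -rmorphXn; congr (phi _).
by elim: i => [|i IHi]; rewrite ?expr1 // expnSr exprM IHi expf_card.
Qed.

Lemma moore_mul s t u (Y : 'M[F]_(u, t)) (beta : 'cV[L]_t) :
  moore s (Y^f *m beta) = Y^f *m moore s beta.
Proof.
apply/matrixP => l i; rewrite !mxE expr_card_sum.
by apply: eq_bigr => j _; rewrite !mxE exprMn rmorph_expr_card.
Qed.

Lemma free_over_mul u t (Y : 'M[F]_(u, t)) (beta : 'cV[L]_t) :
  row_free Y -> free_over beta -> free_over (Y^f *m beta).
Proof.
move=> Y_free beta_free d; rewrite mulmxA -map_mxM => /beta_free/eqP.
by rewrite mulmx_free_eq0 // => /eqP.
Qed.

Lemma moore_col_free s t (beta : 'cV[L]_t) (c : 'cV[L]_s) :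
  (s <= t)%N -> free_over beta -> moore s beta *m c = 0 -> c = 0.
Proof.
(* sum_i c_i X^(q^i) has degree at most q^(s-1) < q^t, yet it vanishes at the
   q^t distinct F-linear combinations of the entries of beta. *)
case: s c => [|s] c le_st beta_free Mc0; first exact: flatmx0.
apply/eqP/negPn/negP => c_neq0.
pose P : {poly L} := \sum_(i < s.+1) c i 0 *: 'X^(q ^ i).
have coefP (i : 'I_s.+1) : P`_(q ^ i) = c i 0.
  rewrite coef_sum (bigD1 i) //= coefZ coefXn eqxx mulr1 big1 ?addr0 // => j ji.
  by rewrite coefZ coefXn eqn_exp2l ?finNzRing_gt1 // eq_sym val_eqE (negbTE ji) mulr0.
have P_neq0 : P != 0.
  apply: contra c_neq0 => /eqP P0; apply/eqP/matrixP => i j.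
  by rewrite ord1 -coefP P0 coef0 mxE.
pose comb (d : 'rV[F]_t) : L := (d^f *m beta) 0 0.
have P_root d : root P (comb d).
  apply/eqP; suff -> : P.[comb d] = (d^f *m moore s.+1 beta *m c) 0 0.
    by rewrite -mulmxA Mc0 mulmx0 mxE.
  rewrite horner_sum mxE; apply: eq_bigr => i _.
  by rewrite !hornerE mulrC -moore_mul mxE.
have comb_inj : injective comb.
  move=> d1 d2 eq_comb; apply/eqP; rewrite -subr_eq0; apply/eqP/beta_free.
  rewrite map_mxB mulmxBl; apply/eqP; rewrite subr_eq0; apply/eqP/matrixP => i j.
  by rewrite !ord1.
have size_P : (size P <= (q ^ s).+1)%N.
  apply: leq_trans (size_sum _ _ _) _; apply/bigmax_leqP => i _.
  apply: leq_trans (size_scale_leq _ _) _.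
  by rewrite size_polyXn ltnS leq_exp2l ?finNzRing_gt1 // -ltnS.
have := max_poly_roots P_neq0 (rs := map comb (enum 'rV[F]_t)).
rewrite map_inj_uniq // enum_uniq size_map -cardE card_mx mul1n.
have -> : all (root P) (map comb (enum 'rV[F]_t)) by apply/allP => _ /mapP[d _ ->].
move=> /(_ isT isT)/leq_trans/(_ size_P); rewrite ltnS leq_exp2l ?finNzRing_gt1 //.
by rewrite leqNgt le_st.
Qed.

Lemma mxrank_moore_le s t (beta : 'cV[L]_t) :
  (s <= t)%N -> free_over beta -> \rank (moore s beta) = s.
Proof.
move=> le_st beta_free; rewrite -mxrank_tr; apply/eqP/inj_row_free => v.
move=> /(congr1 trmx); rewrite trmx_mul trmxK trmx0.
by move=> /moore_col_free-/(_ le_st beta_free)/(congr1 trmx); rewrite trmxK trmx0.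
Qed.

Lemma mxrank_moore s t (beta : 'cV[L]_t) :
  free_over beta -> \rank (moore s beta) = minn s t.
Proof.
move=> beta_free; have [le_st | /ltnW le_ts] := leqP s t.
  exact: mxrank_moore_le.
apply/eqP; rewrite eqn_leq rank_leq_row /=.
have sub_moore : moore t beta = moore s beta *m colsub (widen_ord le_ts) 1%:M.
  by rewrite mulmx_colsub mulmx1; apply/matrixP => l i; rewrite !mxE.
rewrite -{1}(mxrank_moore_le (leqnn t) beta_free) sub_moore.
exact: mxrankM_maxl.
Qed.

End MooreMatrix.

(* The proof of pPrimePowerField, over F instead of 'F_p: the roots of
   X^(q^k) - X in its splitting field are the fixed points of the k-th power of
   the Frobenius, hence form the whole field. *)
Lemma finField_ext_card (F : finFieldType) k : (0 < k)%N ->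
  {L : splittingFieldType F | #|FinFieldExtType L| = (#|F| ^ k)%N}.
Proof.
move=> k_gt0; have [p pr_p pcharFp] := finPcharP F.
have cardF := card_pprimeChar pcharFp; set e := logn p #|F| in cardF.
have e_gt0 : (0 < e)%N.
  by case: (posnP e) => // e0; have := finNzRing_gt1 F; rewrite cardF e0.
pose m := (p ^ (e * k))%N.
have -> : (#|F| ^ k)%N = m by rewrite cardF -expnM.
have m_gt1 : (m > 1)%N by rewrite (ltn_exp2l 0) ?prime_gt1 // muln_gt0 e_gt0.
have m_gt0 := ltnW m_gt1; have m1_gt0 : (m.-1 > 0)%N by rewrite -ltnS prednK.
pose q (R : nzRingType) : {poly R} := 'X^m - 'X.
have Dq R : q R = ('X^(m.-1) - 1) * ('X - 0).
  by rewrite subr0 mulrBl mul1r -exprSr prednK.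
have /FinSplittingFieldFor[/= L splitLq] : q F != 0.
  by rewrite Dq monic_neq0 ?rpredM ?monicXsubC ?monicXnsubC.
rewrite rmorphB rmorphXn /= map_polyX -/(q L) in splitLq.
have pcharL : p \in [pchar L] by rewrite pchar_lalg.
exists L; have /finField_galois_generator[/= a _ Da] : (1 <= {:L})%VS by apply: sub1v.
pose Em := fixedSpace (a ^+ k)%g; rewrite dimv1 expn1 in Da.
have{splitLq} [zs DqL defL] := splitLq.
have Uzs : uniq zs.
  rewrite -separable_prod_XsubC -(eqp_separable DqL) Dq separable_root andbC.
  rewrite /root !hornerE subr_eq0 eq_sym expr0n gtn_eqF ?oner_eq0 //=.
  rewrite cyclotomic.separable_Xn_sub_1 // -subn1 natrB // subr_eq0.
  by rewrite natrX pcharf0 // expr0n gtn_eqF ?muln_gt0 ?e_gt0 // eq_sym oner_eq0.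
suffices /eq_card-> : FinFieldExtType L =i zs.
  apply: succn_inj; rewrite (card_uniqP _) //= -(size_prod_XsubC _ id).
  by rewrite -(eqp_size DqL) size_polyDl size_polyXn // size_polyN size_polyX.
have in_zs : zs =i Em.
  move=> z; rewrite -root_prod_XsubC -(eqp_root DqL) (sameP fixedSpaceP eqP).
  rewrite /root !hornerE subr_eq0 /= /m; congr (_ == z).
  rewrite expnM -cardF.
  elim: (k) => [|i IHi]; first by rewrite gal_id.
  by rewrite expgSr expnSr exprM IHi galM ?Da ?memvf.
suffices defEm : Em = {:L}%VS by move=> z; rewrite in_zs defEm memvf.
apply/eqP; rewrite eqEsubv subvf -defL -[Em]subfield_closed agenvS //.
by rewrite subv_add sub1v; apply/span_subvP => z; rewrite in_zs.
Qed.

Lemma finField_ext (F : finFieldType) k : (0 < k)%N ->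
  exists (L : finFieldType) (phi : {rmorphism F -> L}) (alpha : 'cV[L]_k),
    #|L| = (#|F| ^ k)%N /\ free_over phi alpha.
Proof.
move=> k_gt0; have [L0 cardL] := finField_ext_card F k_gt0.
have dimL : \dim {:L0} = k.
  apply/eqP; rewrite -(eqn_exp2l _ _ (finNzRing_gt1 F)) -cardL.
  by rewrite -(card_vspace (fullv : {vspace finvect_type L0})) card_vspacef.
suff [alpha alpha_free] : exists alpha : 'cV[L0]_(\dim {:L0}), free_over (in_alg L0) alpha.
  by rewrite -dimL; exists (FinFieldExtType L0), (in_alg L0), alpha; rewrite -dimL in cardL.
have /freeP X_free := basis_free (vbasisP (fullv : {vspace L0})).
exists (\col_j (vbasis fullv)`_j) => d /rowP/(_ 0); rewrite !mxE.
under eq_bigr do rewrite !mxE mulr_algl.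
by move=> /X_free d0; apply/rowP => j; rewrite d0 mxE.
Qed.

Section Codes.
Variables (K : fieldType) (m n : nat).
Local Notation N := (m * n)%N.
Implicit Types (C : 'M[K]_N) (x : 'rV[K]_N) (E : {set 'I_m * 'I_n}).

Lemma pc_codeP r (H : 'M[K]_(r, N)) x : (x <= pc_code H)%MS = (x *m H^T == 0).
Proof. exact: sub_kermx. Qed.

Lemma pc_code_col_mxP r1 r2 (H1 : 'M[K]_(r1, N)) (H2 : 'M_(r2, N)) x :
  (x <= pc_code (col_mx H1 H2))%MS = (x *m H1^T == 0) && (x *m H2^T == 0).
Proof. by rewrite pc_codeP tr_col_mx mul_mx_row row_mx_eq0. Qed.

Lemma in_topologyP a b h C :
  in_topology a b h C <->
  exists (Gc : 'M[K]_m) (Gr : 'M[K]_n) (Hg : 'M[K]_(h, N)),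
    [/\ (m - a <= \rank Gc)%N, (n - b <= \rank Gr)%N &
        forall x, (x <= C)%MS = (x <= tens_code Gc Gr)%MS && (x *m Hg^T == 0)].
Proof.
split=> [[Gc [Gr [ra rb [r [Hl [Hg [eqT eqC]]]]]]] | [Gc [Gr [Hg [ra rb memC]]]]].
  exists Gc, Gr, Hg; split=> // x.
  by rewrite (eqmxP eqC) pc_code_col_mxP -pc_codeP (eqmxP eqT).
exists Gc, Gr; split=> //; exists N, (cokermx (tens_code Gc Gr))^T, Hg.
by split; apply: eqmx_rV => x; rewrite ?memC ?pc_code_col_mxP ?pc_codeP trmxK -submxE.
Qed.

Lemma in_topology0P a b C :
  in_topology a b 0 C <->
  exists (Gc : 'M[K]_m) (Gr : 'M[K]_n),
    [/\ (m - a <= \rank Gc)%N, (n - b <= \rank Gr)%N & (C == tens_code Gc Gr)%MS].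
Proof.
split=> [/in_topologyP[Gc [Gr [Hg [ra rb memC]]]] | [Gc [Gr [ra rb eqC]]]].
  exists Gc, Gr; split=> //; apply: eqmx_rV => x.
  by rewrite memC [x *m _]thinmx0 eqxx andbT.
apply/(in_topologyP a b 0 C); exists Gc, Gr, 0; split=> // x.
by rewrite (eqmxP eqC) [x *m _]thinmx0 eqxx andbT.
Qed.

Definition off_mx E : 'M[K]_N := diag_mx (\row_j (mxtens_unindex j \notin E)%:R).

Lemma off_mx_eq0P E x :
  reflect (forall ij, ij \notin E -> x 0 (mxtens_index ij) = 0) (x *m off_mx E == 0).
Proof.
rewrite mul_mx_diag; apply: (iffP eqP) => [x0 ij ijE | x0].
  by move/matrixP/(_ 0 (mxtens_index ij)): x0; rewrite !mxE mxtens_indexK ijE mulr1.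
apply/matrixP => i j; rewrite ord1 !mxE; case: (mxtens_indexP j) => i1 i2.
rewrite mxtens_indexK.
by case: (boolP ((i1, i2) \notin E)) => [/x0 -> | _]; rewrite ?mul0r ?mulr0.
Qed.

Lemma off_mx_setD E t (f : 'I_t -> 'I_N) x :
  (x *m off_mx [set ij in E | mxtens_index ij \notin codom f] == 0) =
  (x *m off_mx E == 0) && (x *m colsub f 1%:M == 0).
Proof.
have x_f l : (x *m colsub f 1%:M) 0 l = x 0 (f l) by rewrite mulmx_colsub mulmx1 mxE.
apply/off_mx_eq0P/andP => [x0 | [/off_mx_eq0P x0 /eqP xf0] ij].
  split; first by apply/off_mx_eq0P => ij ijE; apply: x0; rewrite inE (negbTE ijE).
  apply/eqP/rowP => l; rewrite x_f mxE -(mxtens_unindexK (f l)); apply: x0.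
  by rewrite inE mxtens_unindexK codom_f andbF.
rewrite inE negb_and negbK => /orP[/x0 // | /codomP[l ->]].
by rewrite -x_f xf0 mxE.
Qed.

Lemma correctsP C E :
  corrects C E <-> forall x, (x <= C)%MS -> x *m off_mx E = 0 -> x = 0.
Proof.
split=> [corrC x xC /eqP/off_mx_eq0P x0 | corrC x y xC yC eq_xy].
  by apply: corrC xC (sub0mx _ _) _ => ij /x0 ->; rewrite mxE.
apply/eqP; rewrite -subr_eq0; apply/eqP/corrC.
  by rewrite addmx_sub ?eqmx_opp.
by apply/eqP/off_mx_eq0P => ij ijE; rewrite !mxE eq_xy // subrr.
Qed.

End Codes.

Lemma mxrank_supported_le (F : fieldType) m n a b h (Cout : 'M[F]_(m * n)) E :
  is_MR a b 0 Cout -> correctable a b h E ->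
  (\rank (Cout :&: kermx (off_mx F E)) <= h)%N.
Proof.
case=> _ MR_Cout [F' [C' [/in_topologyP[Gc [Gr [Hg [ra rb memC']]]] corrC']]].
set T := tens_code Gc Gr; set V' := (T :&: kermx (off_mx F' E))%MS.
have rank_V' : (\rank V' <= h)%N.
  apply: (mxrank_le_inj (A := Hg^T)) => x.
  rewrite sub_capmx sub_kermx => /andP[xT xE] xH.
  by apply: (proj1 (correctsP C' E) corrC' x); [rewrite memC' xT xH eqxx | apply/eqP].
have [f info_f] := exists_information_set V'.
pose E' := [set ij in E | mxtens_index ij \notin codom f].
have corrT : corrects T E'.
  apply/correctsP => x xT /eqP; rewrite off_mx_setD => /andP[xE /eqP xf].
  by apply: info_f xf; rewrite sub_capmx sub_kermx xT.
have topT : in_topology a b 0 T.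
  by apply/(in_topology0P a b T); exists Gc, Gr; rewrite /eqmx submx_refl.
have corrCout : corrects Cout E' by apply: MR_Cout; exists F', T.
apply: leq_trans rank_V'; apply: (mxrank_le_inj (A := colsub f 1%:M)) => x.
rewrite sub_capmx sub_kermx => /andP[xC xE] xf.
by apply: (proj1 (correctsP _ _) corrCout x xC); apply/eqP; rewrite off_mx_setD xE xf eqxx.
Qed.

Lemma map_off_mx (F L : fieldType) (phi : {rmorphism F -> L}) m n E :
  map_mx phi (off_mx F E) = off_mx L E :> 'M_(m * n).
Proof. by rewrite map_diag_mx; congr diag_mx; apply/rowP => j; rewrite !mxE rmorph_nat. Qed.

Section MooreCode.
Variables (F : finFieldType) (L : fieldType) (phi : {rmorphism F -> L}).
Variables (m n h : nat) (Cout : 'M[F]_(m * n)).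
Local Notation k := (\rank Cout).
Local Notation G := (row_base Cout).
Local Notation "A ^f" := (map_mx phi A) : ring_scope.
Variable alpha : 'cV[L]_k.
Hypothesis alpha_free : free_over phi alpha.
Local Notation M := (moore F h alpha).

Definition moore_code : 'M[L]_(m * n) := <<kermx M *m G^f>>%MS.

Lemma map_row_base_pinvK : G^f *m (pinvmx G)^f = 1%:M.
Proof. by rewrite -map_mxM mulmxVp ?row_base_free // map_mx1. Qed.

Lemma moore_codeP (x : 'rV[L]_(m * n)) :
  (x <= moore_code)%MS = (x <= Cout^f)%MS && (x *m (pinvmx G)^f *m M == 0).
Proof.
have eqGf : (G^f :=: Cout^f)%MS by apply/map_eqmx/eq_row_base.
rewrite genmxE -eqGf.
apply/idP/andP => [/submxP[w ->] | [/submxP[u ->]]].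
  split; first by rewrite mulmxA submxMl.
  by rewrite mulmxA -(mulmxA _ G^f) map_row_base_pinvK mulmx1 -mulmxA mulmx_ker mulmx0.
rewrite -(mulmxA u) map_row_base_pinvK mulmx1 -sub_kermx => /submxP[w ->].
by rewrite -mulmxA submxMl.
Qed.

Lemma mxrank_moore_code : (h <= k)%N -> \rank moore_code = (k - h)%N.
Proof.
move=> le_hk; rewrite genmxE mxrankMfree ?row_free_map ?row_base_free //.
by rewrite mxrank_ker (mxrank_moore _ alpha_free) (minn_idPl le_hk).
Qed.

Lemma moore_code_in_topology a b :
  in_topology a b 0 Cout -> in_topology a b h moore_code.
Proof.
case/in_topology0P => Gc [Gr [ra rb eqC]].
apply/(in_topologyP a b h); exists Gc^f, Gr^f, ((pinvmx G)^f *m M)^T.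
rewrite !mxrank_map; split=> // x.
have eqCf : (Cout^f :=: Gc^f *t Gr^f)%MS by rewrite -map_mxT; apply/map_eqmx/eqmxP.
by rewrite moore_codeP trmxK mulmxA eqCf.
Qed.

Lemma moore_code_corrects a b E :
  is_MR a b 0 Cout -> correctable a b h E -> corrects moore_code E.
Proof.
move=> MR_Cout corrE; have rank_W := mxrank_supported_le MR_Cout corrE.
set W := (Cout :&: kermx (off_mx F E))%MS in rank_W.
pose V := row_base W; pose Y := V *m pinvmx G.
have VY : V = Y *m G by rewrite mulmxKpV // !eq_row_base capmxSl.
have Y_free : row_free Y.
  apply/eqP/anti_leq; rewrite rank_leq_row -{1}(eqP (row_base_free W)) -/V VY.
  exact: mxrankM_maxl.
apply/correctsP => x xC xE.
have : (x <= V^f)%MS.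
  have eqVf : (V^f :=: W^f)%MS by apply/map_eqmx/eq_row_base.
  rewrite eqVf map_capmx map_kermx map_off_mx.
  rewrite sub_capmx sub_kermx xE eqxx andbT.
  by move: xC; rewrite moore_codeP => /andP[].
case/submxP => lam xV; move: xC; rewrite moore_codeP xV => /andP[_].
rewrite VY map_mxM mulmxA -(mulmxA _ G^f) map_row_base_pinvK mulmx1 -mulmxA -moore_mul.
rewrite mulmx_free_eq0 => [/eqP -> | ]; first by rewrite !mul0mx.
by rewrite /row_free (mxrank_moore _ (free_over_mul Y_free alpha_free)) (minn_idPr rank_W).
Qed.

End MooreCode.

Theorem corollary2 (F : finFieldType) (q m n a b h k : nat) :
  #|F| = q ->
  (a < m)%N -> (b < n)%N ->
  (h <= (m - a) * (n - b) - maxn (m - a) (n - b))%N ->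
  forall Cout : 'M[F]_(m * n),
    \rank Cout = k ->
    is_MR a b 0 Cout ->
    exists (L : finFieldType) (C : 'M[L]_(m * n)),
      [/\ #|L| = (q ^ k)%N, \rank C = (k - h)%N & is_MR a b h C].
Proof.
move=> <- lt_am lt_bn le_h Cout <- MR_Cout.
have [Gc [Gr [ra rb eqC]]] := proj1 (in_topology0P a b Cout) (proj1 MR_Cout).
have le_k : ((m - a) * (n - b) <= \rank Cout)%N.
  by rewrite (eqmxP eqC); apply: leq_trans (leq_mul ra rb) (mxrank_tensmx_ge _ _).
have le_hk : (h <= \rank Cout)%N.
  by apply: leq_trans le_k; apply: leq_trans le_h (leq_subr _ _).
have k_gt0 : (0 < \rank Cout)%N.
  by apply: leq_trans le_k; rewrite muln_gt0 !subn_gt0 lt_am lt_bn.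
have [L [phi [alpha [cardL alpha_free]]]] := finField_ext F k_gt0.
exists L, (moore_code phi h alpha); split=> //.
  exact: mxrank_moore_code.
split; first exact: moore_code_in_topology (proj1 MR_Cout).
by move=> E /(moore_code_corrects alpha_free MR_Cout).
Qed.
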